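(* Let $G=(V,E)$ be a finite simple graph with $n=|V|$ vertices and $m=|E|$ edges, where $n+m$ is even, and let $L$ be its connection matrix. Then $L^2$ is similar over $\mathbb{R}$ to a real symplectic matrix, i.e. to a matrix $S$ satisfying $S^TJS=J$, where $J=\begin{pmatrix}0&I\\-I&0\end{pmatrix}$ is the standard $(n+m)\times(n+m)$ symplectic form.
   Context: Let $G=(V,E)$ be a finite simple graph. Its associated $1$-dimensional simplicial complex is the set of simplices $X=\{\{v\}: v\in V\}\cup E$, where each edge is regarded as a $2$-element subset of $V$; index $(|V|+|E|)\times(|V|+|E|)$ matrices by $X$. The connection matrix $L$ has $L(x,y)=1$ if $x\cap y\neq\emptyset$ and $L(x,y)=0$ otherwise. *)

From HB Require Import structures.
From mathcomp Require Import all_boot all_order all_algebra.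
Set Implicit Arguments. Unset Strict Implicit. Unset Printing Implicit Defensive.
Import Order.TTheory GRing.Theory Num.Theory.
Local Open Scope ring_scope.

(* A finite simple graph is (T, e) with T : finType and e : rel T symmetric
   and irreflexive. *)
Definition simplices (T : finType) (e : rel T) : {set {set T}} :=
  [set A : {set T} | (#|A| == 1)%N ||
     ((#|A| == 2)%N && [forall x in A, forall y in A, (x != y) ==> e x y])].

Definition connmx (R : nzRingType) (T : finType) (e : rel T)
  : 'M[R]_(#|simplices e|) :=
  \matrix_(i, j)
    (if (enum_val i :&: enum_val j) != set0 then 1 else 0).

(* The standard symplectic form J = [[0, I], [-I, 0]] of size N (N even),
   written out entrywise with blocks of size N./2. *)
Definition symplJ (R : nzRingType) (N : nat) : 'M[R]_N :=
  \matrix_(i < N, j < N)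
    (if ((i < N./2)%N && (nat_of_ord j == (nat_of_ord i + N./2)%N)) then 1
     else if ((N./2 <= i)%N && ((nat_of_ord j + N./2)%N == nat_of_ord i)) then -1
     else 0).

(* Let D be the diagonal sign matrix (+1 on vertices, -1 on edges) and A the
   vertex-edge incidence matrix, both indexed by the simplices.  The connection
   matrix factors as L = (1 + A)^T D (1 + A).  Congruence by the unipotent
   1 + A preserves the skew form W = A - A^T while D reverses it, so L W L = -W
   and B = L^2 satisfies B W B^T = W.  The form W is degenerate exactly on the
   fixed space V1 of B, which has even dimension; adding a nondegenerate skew
   form supported on V1 yields a nondegenerate skew form preserved by B, and a
   Darboux basis of that form conjugates B into a symplectic matrix. *)

From HB Require Import structures.
From mathcomp Require Import all_boot all_order all_algebra.
From mathcomp Require Import zify.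
Import Order.TTheory GRing.Theory Num.Theory.
Local Open Scope ring_scope.
Set Implicit Arguments. Unset Strict Implicit. Unset Printing Implicit Defensive.

Definition sympl_block (R : nzRingType) (h : nat) : 'M[R]_(h + h) :=
  block_mx 0 1%:M (- 1%:M) 0.

Lemma sympl_block_sqr (R : nzRingType) h :
  sympl_block R h *m sympl_block R h = - 1%:M.
Proof.
rewrite /sympl_block mulmx_block !(mul0mx, mulmx0, mul1mx, mulmx1, add0r, addr0).
by rewrite [1%:M in RHS](scalar_mx_block h h) opp_block_mx oppr0.
Qed.

Lemma tr_sympl_block (R : nzRingType) h :
  (sympl_block R h)^T = - sympl_block R h.
Proof.
rewrite /sympl_block tr_block_mx !trmx0 trmx1 raddfN /= trmx1.
by rewrite opp_block_mx !oppr0 opprK.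
Qed.

Lemma sympl_block_unit (R : comUnitRingType) h : sympl_block R h \in unitmx.
Proof.
have J_inv : sympl_block R h *m - sympl_block R h = 1%:M.
  by rewrite mulmxN sympl_block_sqr opprK.
by case/mulmx1_unit: J_inv.
Qed.

Definition interleave (R : nzRingType) (a b n : nat)
    (X : 'M[R]_(a + a, n)) (Y : 'M[R]_(b + b, n)) : 'M[R]_((a + b) + (a + b), n) :=
  col_mx (col_mx (usubmx X) (usubmx Y)) (col_mx (dsubmx X) (dsubmx Y)).

Lemma interleave_sub (F : fieldType) a b n (X : 'M[F]_(a + a, n))
    (Y : 'M[F]_(b + b, n)) m (C : 'M_(m, n)) :
  (interleave X Y <= C)%MS = (X <= C)%MS && (Y <= C)%MS.
Proof.
rewrite /interleave !col_mx_sub -[X in _ = (X <= C)%MS && _]vsubmxK.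
by rewrite -[Y in _ = _ && (Y <= C)%MS]vsubmxK !col_mx_sub andbACA.
Qed.

Section SkewForm.
Variables (R : numFieldType) (n : nat) (W : 'M[R]_n).
Hypothesis W_skew : W^T = - W.

Lemma trmx_skew_form m p (A : 'M_(m, n)) (B : 'M_(p, n)) :
  (A *m W *m B^T)^T = - (B *m W *m A^T).
Proof. by rewrite !trmx_mul !trmxK W_skew mulNmx mulmxN mulmxA. Qed.

Lemma skew_form_eq0C m p (A : 'M_(m, n)) (B : 'M_(p, n)) :
  A *m W *m B^T = 0 -> B *m W *m A^T = 0.
Proof. by move=> AB0; apply/eqP; rewrite -oppr_eq0 -trmx_skew_form AB0 trmx0. Qed.

Lemma skew_form_self (x : 'rV_n) : x *m W *m x^T = 0.
Proof.
set a := x *m W *m x^T; have /matrixP/(_ 0 0) : a^T = - a by rewrite trmx_skew_form.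
rewrite [LHS]mxE [RHS]mxE => /eqP; rewrite -addr_eq0 -mulr2n mulrn_eq0 /= => /eqP a0.
by rewrite [a]mx11_scalar a0 raddf0.
Qed.

Definition orthmx m (A : 'M_(m, n)) := kermx (W *m A^T).

Lemma sub_orthmx m p (A : 'M_(m, n)) (B : 'M_(p, n)) :
  (A <= orthmx B)%MS = (A *m W *m B^T == 0).
Proof. by rewrite sub_kermx mulmxA. Qed.

Lemma orthmxC m p (A : 'M_(m, n)) (B : 'M_(p, n)) :
  (A <= orthmx B)%MS = (B <= orthmx A)%MS.
Proof. by rewrite !sub_orthmx; apply/eqP/eqP; apply: skew_form_eq0C. Qed.

Definition skew_nondeg m (U : 'M_(m, n)) := (U :&: orthmx U <= (0 : 'M_n))%MS.

Lemma form_col_mx m1 m2 p1 p2 (A1 : 'M_(m1, n)) (A2 : 'M_(m2, n))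
    (B1 : 'M_(p1, n)) (B2 : 'M_(p2, n)) :
  col_mx A1 A2 *m W *m (col_mx B1 B2)^T =
  block_mx (A1 *m W *m B1^T) (A1 *m W *m B2^T) (A2 *m W *m B1^T) (A2 *m W *m B2^T).
Proof. by rewrite mul_col_mx tr_col_mx mul_col_row. Qed.

Lemma interleave_form a b (X : 'M_(a + a, n)) (Y : 'M_(b + b, n)) :
    X *m W *m X^T = sympl_block R a -> Y *m W *m Y^T = sympl_block R b ->
    X *m W *m Y^T = 0 ->
  interleave X Y *m W *m (interleave X Y)^T = sympl_block R (a + b).
Proof.
rewrite -[X]vsubmxK -[Y]vsubmxK /interleave !col_mxKu !col_mxKd.
rewrite !form_col_mx /sympl_block -block_mx0.
case/eq_block_mx=> [XuXu XuXd XdXu XdXd]; case/eq_block_mx=> [YuYu YuYd YdYu YdYd].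
case/eq_block_mx=> [XuYu XuYd XdYu XdYd].
rewrite XuXu XuXd XdXu XdXd YuYu YuYd YdYu YdYd XuYu XuYd XdYu XdYd.
rewrite (skew_form_eq0C XuYu) (skew_form_eq0C XuYd).
rewrite (skew_form_eq0C XdYu) (skew_form_eq0C XdYd).
by rewrite !block_mx0 [1%:M in RHS](scalar_mx_block a b) opp_block_mx !oppr0.
Qed.

Lemma hyperbolic_pair m (U : 'M_(m, n)) : skew_nondeg U -> U != 0 ->
  exists2 X : 'M_(1 + 1, n), (X <= U)%MS & X *m W *m X^T = sympl_block R 1.
Proof.
move=> nondegU nzU; set u := nz_row U; have uU : (u <= U)%MS := nz_row_sub U.
have /row_subPn[i] : ~~ (U <= orthmx u)%MS.
  rewrite -orthmxC; apply: contra nzU => uUo.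
  by rewrite -nz_row_eq0 -submx0 (submx_trans _ nondegU) // sub_capmx uU.
rewrite orthmxC sub_orthmx; set y := row i U => nz_uy.
set a := (u *m W *m y^T) 0 0; have uyE : u *m W *m y^T = a%:M := mx11_scalar _.
have a_neq0 : a != 0 by apply: contraNneq nz_uy => a0; rewrite uyE a0 raddf0.
exists (col_mx u (a^-1 *: y)); first by rewrite col_mx_sub uU scalemx_sub ?row_sub.
have uv : u *m W *m (a^-1 *: y)^T = 1%:M.
  by rewrite linearZ /= -scalemxAr uyE scale_scalar_mx mulVf.
have vu : a^-1 *: y *m W *m u^T = - 1%:M.
  by apply/eqP; rewrite -eqr_oppLR -trmx_skew_form uv trmx1.
by rewrite form_col_mx uv vu !skew_form_self.
Qed.

Lemma sub_orthmx_adds m p (U : 'M_(m, n)) (X : 'M_(p, n)) :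
  (X <= U)%MS -> X *m W *m X^T \in unitmx -> (U <= (U :&: orthmx X) + X)%MS.
Proof.
(* C *m X is the W-orthogonal projection of U onto the row space of X. *)
move=> XU unitX; set C := U *m W *m X^T *m invmx (X *m W *m X^T).
rewrite -[U in (U <= _)%MS](subrK (C *m X)) addmx_sub_adds ?submxMl //.
rewrite sub_capmx sub_orthmx addmx_sub ?eqmx_opp ?(submx_trans (submxMl _ _) XU) //=.
have CK : C *m (X *m W *m X^T) = U *m W *m X^T := mulmxKV unitX _.
by rewrite !mulmxBl -CK !mulmxA subrr.
Qed.

Lemma skew_nondeg_orthmx m p (U : 'M_(m, n)) (X : 'M_(p, n)) :
  skew_nondeg U -> (U <= (U :&: orthmx X) + X)%MS -> skew_nondeg (U :&: orthmx X)%MS.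
Proof.
move=> nondegU UU'X; set U' := (U :&: orthmx X)%MS; set Z := (U' :&: orthmx U')%MS.
have ZU' : (Z <= U')%MS := capmxSl _ _.
apply: submx_trans nondegU; rewrite sub_capmx (submx_trans ZU' (capmxSl _ _)) /=.
rewrite orthmxC (submx_trans UU'X) // addsmx_sub orthmxC capmxSr /=.
by rewrite orthmxC (submx_trans ZU' (capmxSr _ _)).
Qed.

Theorem symplectic_basis m (U : 'M_(m, n)) : skew_nondeg U ->
  exists d (P : 'M_(d + d, n)),
    (P == U)%MS /\ P *m W *m P^T = sympl_block R d.
Proof.
have [k] := ubnP (\rank U); elim: k m U => // k IH m U /ltnSE rU nondegU.
have [-> | nzU] := eqVneq U 0.
  by exists 0%N, 0; rewrite !sub0mx [LHS]flatmx0 [RHS]flatmx0.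
have [X XU XWX] := hyperbolic_pair nondegU nzU.
have unitX : X *m W *m X^T \in unitmx by rewrite XWX sympl_block_unit.
set U' := (U :&: orthmx X)%MS; have UU'X := sub_orthmx_adds XU unitX.
have rU' : (\rank U' < k)%N.
  apply: leq_trans rU; apply: rank_ltmx; rewrite ltmxE capmxSl /=.
  apply: contraL unitX => /(submx_trans XU)/(submx_trans)/(_ (capmxSr _ _)).
  by rewrite sub_orthmx => /eqP ->; rewrite unitmxE det0 unitr0.
have [d [P' [/andP[P'U' U'P'] P'WP']]] := IH _ U' rU' (skew_nondeg_orthmx nondegU UU'X).
have P'X : P' *m W *m X^T = 0.
  by apply/eqP; rewrite -sub_orthmx (submx_trans P'U' (capmxSr _ _)).
have /andP[XI P'I] : (X <= interleave X P')%MS && (P' <= interleave X P')%MS.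
  by rewrite -interleave_sub submx_refl.
exists (1 + d)%N, (interleave X P'); split.
  rewrite /= interleave_sub XU (submx_trans P'U' (capmxSl _ _)) /=.
  by rewrite (submx_trans UU'X) // addsmx_sub XI (submx_trans U'P' P'I).
exact: interleave_form (skew_form_eq0C P'X).
Qed.

End SkewForm.

Lemma symplJ_block (R : nzRingType) h : symplJ R (h + h) = sympl_block R h.
Proof.
apply/matrixP => i j; rewrite /symplJ mxE (_ : (h + h)./2 = h) ?addnn ?doubleK //.
rewrite -[i]splitK -[j]splitK; case: (split i) => i'; case: (split j) => j' /=;
  rewrite /sympl_block ?(block_mxEul, block_mxEur, block_mxEdl, block_mxEdr) !mxE;
  have := ltn_ord i'; have := ltn_ord j'.
- by move=> j'h i'h; rewrite i'h (leqNgt h) i'h ifF //; apply/negbTE; lia.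
- move=> _ i'h; rewrite i'h [(i' + h)%N]addnC eqn_add2l /=.
  case: (eqVneq j' i') => [->|ne]; first by rewrite !eqxx.
  by rewrite leqNgt i'h ifF //; apply: negbTE ne.
- move=> _ _; rewrite ltnNge leq_addr /= addnC eqn_add2l.
  case: (eqVneq i' j') => [->|ne]; first by rewrite eqxx.
  by rewrite ifF ?oppr0 //; apply: negbTE; rewrite eq_sym.
- by move=> j'h i'h; rewrite ltnNge leq_addr /= ifF //; apply/negbTE; lia.
Qed.

Lemma skew_unitmx_congr_symplJ (R : numFieldType) n (W : 'M[R]_n) :
  W^T = - W -> W \in unitmx ->
  exists2 P : 'M_n, P \in unitmx & P *m W *m P^T = symplJ R n.
Proof.
move=> W_skew unitW.
have nondeg1 : skew_nondeg W (1%:M : 'M_n).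
  rewrite /skew_nondeg /orthmx trmx1 mulmx1.
  by move: unitW; rewrite -row_free_unit -kermx_eq0 => /eqP ->; rewrite capmx0 submx_refl.
have [d [P [/andP[_ fullP] PWP]]] := symplectic_basis W_skew nondeg1.
have nd : n = (d + d)%N.
  apply/eqP; rewrite eqn_leq -{1}(mxrank1 R n) (leq_trans (mxrankS fullP)) ?rank_leq_row //=.
  rewrite -{1}(mxrank_unit (sympl_block_unit R d)) -PWP.
  exact: leq_trans (mxrankM_maxl _ _) (leq_trans (mxrankM_maxl _ _) (rank_leq_col _)).
subst n; exists P; first by rewrite -row_full_unit -sub1mx.
by rewrite symplJ_block.
Qed.

Lemma symplJ_sqr (R : nzRingType) n : ~~ odd n ->
  symplJ R n *m symplJ R n = - 1%:M.
Proof.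
by move=> n_even; rewrite -(even_halfK n_even) -addnn symplJ_block sympl_block_sqr.
Qed.

Lemma tr_symplJ (R : nzRingType) n : ~~ odd n -> (symplJ R n)^T = - symplJ R n.
Proof.
by move=> n_even; rewrite -(even_halfK n_even) -addnn symplJ_block tr_sympl_block.
Qed.

Lemma symplJ_unit (R : comUnitRingType) n : ~~ odd n -> symplJ R n \in unitmx.
Proof.
by move=> n_even; rewrite -(even_halfK n_even) -addnn symplJ_block sympl_block_unit.
Qed.

Lemma skew_unitmx_even (R : numFieldType) n (K : 'M[R]_n) :
  K^T = - K -> K \in unitmx -> ~~ odd n.
Proof.
move=> K_skew; rewrite unitmxE unitfE => detK_neq0.
have : \det K = (-1) ^+ n * \det K by rewrite -{1}det_tr K_skew -scaleN1r detZ.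
rewrite -signr_odd; case: (odd n) => //; rewrite expr1 mulN1r => /eqP.
by rewrite -addr_eq0 -mulr2n mulrn_eq0 (negbTE detK_neq0).
Qed.

Lemma symplectic_trC (R : comUnitRingType) n (J S : 'M[R]_n) :
  J *m J = - 1%:M -> S *m J *m S^T = J -> S^T *m J *m S = J.
Proof.
move=> JJ SJS; have : S *m - (J *m S^T *m J) = 1%:M.
  by rewrite mulmxN !mulmxA SJS JJ opprK.
move/mulmx1C; rewrite mulNmx => /eqP; rewrite eqr_oppLR => /eqP SJSJ.
have -> : S^T *m J *m S = - (J *m (J *m S^T *m J *m S)).
  by rewrite !mulmxA JJ !mulNmx mul1mx opprK.
by rewrite SJSJ mulmxN mulmx1 opprK.
Qed.

Lemma similar_symplectic_of_form (R : numFieldType) n (B Om : 'M[R]_n) :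
  Om^T = - Om -> Om \in unitmx -> B *m Om *m B^T = Om ->
  exists (P S : 'M_n), [/\ P \in unitmx,
    S^T *m symplJ R n *m S = symplJ R n & B = invmx P *m S *m P].
Proof.
move=> Om_skew unitOm BOmB.
have [P unitP POmP] := skew_unitmx_congr_symplJ Om_skew unitOm.
exists P, (P *m B *m invmx P); split => //; last first.
  by rewrite !mulmxA mulVmx // mul1mx mulmxKV.
apply: symplectic_trC; first exact: symplJ_sqr (skew_unitmx_even Om_skew unitOm).
rewrite -POmP !trmx_mul trmx_inv !mulmxA mulmxKV // mulmxK ?unitmx_tr //.
by congr (_ *m _); rewrite -{2}BOmB !mulmxA.
Qed.

Lemma unitmx_ker0 (F : fieldType) n (A : 'M[F]_n) :
  (forall x : 'rV_n, x *m A = 0 -> x = 0) -> A \in unitmx.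
Proof.
move=> A_inj; rewrite -row_free_unit -kermx_eq0; apply/eqP/row_matrixP => i.
by rewrite row0; apply: A_inj; apply/eqP; rewrite -sub_kermx row_sub.
Qed.

Lemma dotmx_eq0 (R : realFieldType) n (x : 'rV[R]_n) : (x *m x^T == 0) = (x == 0).
Proof.
apply/idP/eqP => [/eqP/matrixP/(_ 0 0)|->]; last by rewrite mul0mx.
rewrite !mxE => sum_sq0; apply/rowP => k; rewrite mxE.
have sq_ge0 j : xpredT j -> 0 <= x 0 j * x^T j 0 by rewrite mxE -expr2 sqr_ge0.
have /eqP := psumr_eq0P sq_ge0 sum_sq0 (i := k) isT.
by rewrite mxE mulf_eq0 orbb => /eqP.
Qed.

Lemma sub_mulmx_tr_eq0 (R : realFieldType) m n (A : 'M[R]_(m, n)) (x : 'rV_n) :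
  (x <= A)%MS -> x *m A^T = 0 -> x = 0.
Proof.
case/submxP => y -> yAAt; apply/eqP; rewrite -dotmx_eq0.
by rewrite trmx_mul mulmxA yAAt mul0mx.
Qed.

Section InvariantForm.
Variables (R : realFieldType) (n : nat) (B W : 'M[R]_n).
Hypotheses (B_sym : B^T = B) (W_skew : W^T = - W) (BWB : B *m W *m B = W).
Hypothesis fixedB : forall y : 'rV_n, (y *m B == y) = (y *m W == 0).
Hypothesis n_even : ~~ odd n.

Lemma fixed_of_orth_im (x : 'rV_n) : x *m W *m (B - 1%:M) = 0 -> x *m B = x.
Proof.
rewrite mulmxBr mulmx1 => /eqP; rewrite subr_eq0 fixedB => /eqP xWW.
have WxWt : W *m (x *m W)^T = 0.
  by apply/eqP; rewrite -trmx_eq0 trmx_mul trmxK W_skew mulmxN xWW oppr0.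
apply/eqP; rewrite fixedB -dotmx_eq0.
by rewrite -mulmxA WxWt mulmx0.
Qed.

Lemma rank_sub1_even : ~~ odd (\rank (B - 1%:M)).
Proof.
(* W restricts to a nondegenerate form on the row space of B - 1. *)
set Q := row_base (B - 1%:M).
have QB1 : (B - 1%:M) *m pinvmx Q *m Q = B - 1%:M by rewrite mulmxKpV ?eq_row_base.
apply: (@skew_unitmx_even _ _ (Q *m W *m Q^T)); first by rewrite trmx_skew_form.
apply: unitmx_ker0 => z zQWQ; apply: (row_free_inj (row_base_free (B - 1%:M))).
rewrite mul0mx; set x := z *m Q.
have xWQ : x *m W *m Q^T = 0 by rewrite /x !mulmxA in zQWQ *.
have /fixed_of_orth_im xB : x *m W *m (B - 1%:M) = 0.
  by rewrite -[B]B_sym -trmx1 -raddfB /= -QB1 trmx_mul mulmxA xWQ mul0mx.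
apply: (sub_mulmx_tr_eq0 (A := B - 1%:M)).
  by rewrite (submx_trans (submxMl _ _)) ?eq_row_base.
by rewrite raddfB /= B_sym trmx1 mulmxBr xB mulmx1 subrr.
Qed.

Lemma invariant_skew_form :
  exists Om : 'M_n, [/\ Om^T = - Om, Om \in unitmx & B *m Om *m B^T = Om].
Proof.
(* B fixes V1 pointwise, and the added form vanishes on the row space of B - 1. *)
set V1 := kermx (B - 1%:M); set K := symplJ R (\rank V1).
have [G [G_free GV1]] : exists G : 'M_(\rank V1, n), row_free G /\ (G :=: V1)%MS.
  by exists (row_base V1); split; [exact: row_base_free | exact: eq_row_base].
have rV1_even : ~~ odd (\rank V1).
  by rewrite mxrank_ker oddB ?rank_leq_col // (negbTE n_even) (negbTE rank_sub1_even).
have GB1 : G *m (B - 1%:M) = 0 by apply/eqP; rewrite -sub_kermx GV1.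
have GB : G *m B = G by move/eqP: GB1; rewrite mulmxBr mulmx1 subr_eq0 => /eqP.
exists (W + G^T *m K *m G); split.
- rewrite raddfD /= trmx_mul (trmx_mul G^T) trmxK tr_symplJ // W_skew.
  by rewrite mulNmx mulmxN mulmxA opprD.
- apply: unitmx_ker0 => x xOm.
  have xB : x *m B = x.
    apply: fixed_of_orth_im.
    have := congr1 (mulmx^~ (B - 1%:M)) xOm; rewrite /= mul0mx (mulmxDr x) mulmxDl.
    by rewrite !mulmxA -(mulmxA _ G) GB1 mulmx0 addr0.
  have xW : x *m W = 0 by apply/eqP; rewrite -fixedB xB.
  have xGK : x *m G^T *m K = 0.
    apply: (row_free_inj G_free); rewrite mul0mx.
    by rewrite mulmxDr xW add0r !mulmxA in xOm.
  have xGt : x *m G^T = 0.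
    by rewrite -(mulmxK (symplJ_unit _ rV1_even) (x *m G^T)) xGK mul0mx.
  apply: (sub_mulmx_tr_eq0 (A := G)) xGt.
  by rewrite GV1 sub_kermx mulmxBr mulmx1 xB subrr.
- have BGt : B *m G^T = G^T by rewrite -[B]B_sym -trmx_mul GB.
  by rewrite B_sym mulmxDr mulmxDl BWB !mulmxA BGt -(mulmxA _ G) GB.
Qed.

End InvariantForm.

Theorem similar_symplectic (R : realFieldType) n (B W : 'M[R]_n) :
    ~~ odd n -> B^T = B -> W^T = - W -> B *m W *m B = W ->
    (forall y : 'rV_n, (y *m B == y) = (y *m W == 0)) ->
  exists (P S : 'M_n), [/\ P \in unitmx,
    S^T *m symplJ R n *m S = symplJ R n & B = invmx P *m S *m P].
Proof.
move=> n_even B_sym W_skew BWB fixedB.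
have [Om [Om_skew unitOm BOmB]] := invariant_skew_form B_sym W_skew BWB fixedB n_even.
exact: similar_symplectic_of_form Om_skew unitOm BOmB.
Qed.

Section UnipotentCongruence.
Variables (R : realFieldType) (n : nat) (D A : 'M[R]_n).
Hypotheses (D_sym : D^T = D) (DD : D *m D = 1%:M) (DA : D *m A = A) (AD : A *m D = - A).

Definition Lmx := (1%:M + A)^T *m D *m (1%:M + A).
Definition Wmx := A - A^T.

Lemma incidence_sqr0 : A *m A = 0.
Proof.
have : A *m A = - (A *m A) by rewrite -{2}DA mulmxA AD mulNmx.
by move/eqP; rewrite -addr_eq0 -mulr2n -scaler_nat scaler_eq0 pnatr_eq0 => /eqP.
Qed.

Lemma incidence_tr_sign : A^T *m D = A^T.
Proof. by rewrite -{1}D_sym -trmx_mul DA. Qed.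

Lemma sign_incidence_tr : D *m A^T = - A^T.
Proof. by rewrite -{1}D_sym -trmx_mul AD raddfN. Qed.

Lemma incidence_tr_sqr0 : A^T *m A^T = 0.
Proof. by rewrite -trmx_mul incidence_sqr0 trmx0. Qed.

Lemma Lmx_sym : Lmx^T = Lmx.
Proof. by rewrite /Lmx !trmx_mul trmxK D_sym mulmxA. Qed.

Lemma LmxE : Lmx = D + A + A^T + A^T *m A.
Proof.
rewrite /Lmx [(1%:M + A)^T]raddfD /= trmx1 mulmxDl mul1mx incidence_tr_sign.
by rewrite !(mulmxDl, mulmxDr, mulmx1) DA -[RHS]addrA.
Qed.

Definition Lmx_inv := (1%:M - A) *m D *m (1%:M - A)^T.

Lemma unipotent_inv (N : 'M[R]_n) : N *m N = 0 -> (1%:M + N) *m (1%:M - N) = 1%:M.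
Proof. by move=> NN; rewrite mulmxDl mul1mx mulmxBr mulmx1 NN subr0 subrK. Qed.

Lemma Lmx_invP : Lmx *m Lmx_inv = 1%:M.
Proof.
rewrite /Lmx /Lmx_inv !mulmxA -(mulmxA _ (1%:M + A)) unipotent_inv ?incidence_sqr0 // mulmx1.
rewrite -(mulmxA _ D D) DD mulmx1 [(1%:M - A)^T]raddfB [(1%:M + A)^T]raddfD /= trmx1.
by rewrite unipotent_inv ?incidence_tr_sqr0.
Qed.

Definition Mmx := A + A^T.

Lemma Lmx_sub_inv : Lmx - Lmx_inv = Mmx *m Mmx.
Proof.
have -> : Lmx_inv = D + A + A^T - A *m A^T.
  rewrite /Lmx_inv [(1%:M - A)^T]raddfB /= trmx1 mulmxBl mul1mx AD opprK.
  by rewrite !(mulmxBr, mulmxDl, mulmx1) sign_incidence_tr opprD opprK addrA.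
rewrite LmxE /Mmx !(mulmxDl, mulmxDr) incidence_sqr0 incidence_tr_sqr0 add0r addr0.
by rewrite opprB addrCA addrAC subrr add0r.
Qed.

Lemma Wmx_skew : Wmx^T = - Wmx.
Proof. by rewrite /Wmx raddfB /= trmxK opprB. Qed.

Lemma unipotent_congr_Wmx : (1%:M + A) *m Wmx *m (1%:M + A)^T = Wmx.
Proof.
have AW : A *m Wmx = - (A *m A^T) by rewrite /Wmx mulmxBr incidence_sqr0 sub0r.
have WAt : Wmx *m A^T = A *m A^T by rewrite /Wmx mulmxBl incidence_tr_sqr0 subr0.
rewrite [(1%:M + A)^T]raddfD /= trmx1 mulmxDl mul1mx AW mulmxDr mulmx1.
by rewrite mulmxBl WAt -mulmxA incidence_tr_sqr0 mulmx0 subr0 subrK.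
Qed.

Lemma unipotent_congr_Wmx_tr : (1%:M + A)^T *m Wmx *m (1%:M + A) = Wmx.
Proof.
have AtW : A^T *m Wmx = A^T *m A by rewrite /Wmx mulmxBr incidence_tr_sqr0 subr0.
have WA : Wmx *m A = - (A^T *m A) by rewrite /Wmx mulmxBl incidence_sqr0 sub0r.
rewrite [(1%:M + A)^T]raddfD /= trmx1 mulmxDl mul1mx AtW mulmxDr mulmx1.
by rewrite mulmxDl WA -mulmxA incidence_sqr0 mulmx0 addr0 addrK.
Qed.

Lemma sign_congr_Wmx : D *m Wmx *m D = - Wmx.
Proof.
rewrite /Wmx mulmxBr DA sign_incidence_tr opprK mulmxDl AD incidence_tr_sign.
by rewrite opprB addrC.
Qed.

Lemma Lmx_skew : Lmx *m Wmx *m Lmx = - Wmx.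
Proof.
have -> : Lmx *m Wmx *m Lmx = (1%:M + A)^T *m
    (D *m ((1%:M + A) *m Wmx *m (1%:M + A)^T) *m D) *m (1%:M + A).
  by rewrite /Lmx !mulmxA.
by rewrite unipotent_congr_Wmx sign_congr_Wmx mulmxN mulNmx unipotent_congr_Wmx_tr.
Qed.

Lemma Lmx_sqr_fixed (y : 'rV_n) : (y *m (Lmx *m Lmx) == y) = (y *m Wmx == 0).
Proof.
(* L^2 - 1 = (L - L^-1) L = M^2 L with M symmetric, and W = - M D. *)
have unitL : Lmx \in unitmx by case/mulmx1_unit: Lmx_invP.
have unitD : D \in unitmx by case/mulmx1_unit: DD.
have LL1 : Lmx *m Lmx - 1%:M = Mmx *m Mmx *m Lmx.
  by rewrite -Lmx_sub_inv mulmxBl (mulmx1C Lmx_invP).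
have Mmx_sym : Mmx^T = Mmx by rewrite /Mmx raddfD /= trmxK addrC.
have WE : Wmx = - (Mmx *m D) by rewrite /Mmx /Wmx mulmxDl AD incidence_tr_sign opprD opprK.
transitivity (y *m Mmx == 0).
  rewrite -subr_eq0 -{2}[y]mulmx1 -mulmxBr LL1 (mulmxA y) (mulmxA y).
  apply/eqP/eqP => [yMML | ->]; last by rewrite !mul0mx.
  have yMM : y *m Mmx *m Mmx = 0.
    by rewrite -(mulmxK unitL (y *m Mmx *m Mmx)) yMML mul0mx.
  by apply/eqP; rewrite -dotmx_eq0 trmx_mul Mmx_sym mulmxA yMM mul0mx.
rewrite WE mulmxN oppr_eq0 mulmxA.
apply/eqP/eqP => [-> | yMD]; first by rewrite mul0mx.
by rewrite -(mulmxK unitD (y *m Mmx)) yMD mul0mx.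
Qed.

End UnipotentCongruence.

Section ConnectionMatrix.
Variables (R : nzRingType) (T : finType) (e : rel T).
Local Notation N := #|simplices e|.
Local Notation sx i := (enum_val (i : 'I_N)).

Definition is_vertex (i : 'I_N) := #|sx i| == 1%N.

Definition signmx : 'M[R]_N := diag_mx (\row_i (if is_vertex i then 1 else -1)).

Definition incmx : 'M[R]_N :=
  \matrix_(i, j) (is_vertex i && ~~ is_vertex j && (sx i \subset sx j))%:R.

Lemma signmx_sym : signmx^T = signmx. Proof. exact: tr_diag_mx. Qed.

Lemma signmx_sqr : signmx *m signmx = 1%:M.
Proof.
apply/matrixP => i j; rewrite mul_diag_mx !mxE.
by case: (is_vertex i); rewrite ?mul1r // mulN1r -mulNrn opprK.
Qed.

Lemma signmx_incmx : signmx *m incmx = incmx.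
Proof.
apply/matrixP => i j; rewrite mul_diag_mx !mxE.
by case: (is_vertex i); rewrite ?mul1r ?mul0rn ?mulr0.
Qed.

Lemma incmx_signmx : incmx *m signmx = - incmx.
Proof.
apply/matrixP => i j; rewrite mul_mx_diag !mxE.
by case: (is_vertex j); rewrite ?andbF ?mul0r ?oppr0 ?andbT ?mulrN1.
Qed.

Lemma card_simplex i : (#|sx i| == 1%N) || (#|sx i| == 2%N).
Proof. by have := enum_valP i; rewrite inE => /orP[-> | /andP[-> _]]; rewrite ?orbT. Qed.

Lemma card_edge i : ~~ is_vertex i -> #|sx i| = 2%N.
Proof. by have := card_simplex i; rewrite /is_vertex => /orP[-> | /eqP ->]. Qed.

Lemma card_vertices_sub (S : {set T}) :
  #|[set k | is_vertex k && (sx k \subset S)]| = #|S|.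
Proof.
rewrite -(card_imset _ (@enum_val_inj _ _)) -(card_imset (mem S) (@set1_inj T)).
congr #|pred_of_set _|; apply/setP => Y.
apply/imsetP/imsetP => [[k] | [a aS ->]].
  rewrite inE => /andP[/cards1P[a ka] kS] ->; exists a => //.
  by move: kS; rewrite ka sub1set.
have a_simplex : [set a] \in simplices e by rewrite inE cards1 eqxx.
exists (enum_rank_in a_simplex [set a]); last by rewrite enum_rankK_in.
by rewrite inE /is_vertex enum_rankK_in // cards1 eqxx sub1set.
Qed.

Lemma incmx_gramE i j : (incmx^T *m incmx) i j =
  (~~ is_vertex i && ~~ is_vertex j)%:R * #|sx i :&: sx j|%:R.
Proof.
rewrite mxE -card_vertices_sub; set S := [set k | _].
rewrite -(sum1_card (pred_of_set S)) natr_sum mulr_sumr [RHS]big_mkcond /=.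
apply: eq_bigr => k _; rewrite !mxE inE subsetI.
by case: (is_vertex k); case: (is_vertex i); case: (is_vertex j);
  case: (sx k \subset sx i); case: (sx k \subset sx j); rewrite /= ?mulr1 ?mulr0 ?mul1r ?mul0r.
Qed.

Lemma connmxE : connmx R e = signmx + incmx + incmx^T + incmx^T *m incmx.
Proof.
apply/matrixP => i j; have := incmx_gramE i j; rewrite !mxE => ->.
have eq_simplex : (i == j) = (sx i == sx j) by apply/eqP/eqP => [-> | /enum_val_inj].
have vertex_meetE k X : is_vertex k -> (sx k :&: X != set0) = (sx k \subset X).
  by case/cards1P => a ->; rewrite setI_eq0 disjoints1 negbK sub1set.
case vi: (is_vertex i); case vj: (is_vertex j); rewrite /= ?mul0r ?mul1r ?addr0.
- rewrite vertex_meetE // eq_simplex; move: vi vj => /cards1P[a ->] /cards1P[b ->].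
  by rewrite sub1set in_set1 (inj_eq (@set1_inj T)); case: (a == b).
- have -> : (i == j) = false by apply: contraFF vj => /eqP <-.
  by rewrite vertex_meetE // add0r; case: (_ \subset _).
- have -> : (i == j) = false by apply: contraFF vi => /eqP ->.
  by rewrite setIC vertex_meetE // add0r; case: (_ \subset _).
- have [<- | nij] := eqVneq i j.
    rewrite setIid card_edge ?vi // -cards_eq0 card_edge ?vi //= mulr1n.
    by rewrite -[2%N]/(1 + 1)%N natrD addKr.
  rewrite mulr0n add0r; suff : (#|sx i :&: sx j| <= 1)%N.
    by rewrite -cards_eq0; case: #|_| => [|[|]].
  rewrite leqNgt; apply: contra nij => card_ij; rewrite eq_simplex; apply/eqP.
  have ij_i : sx i :&: sx j = sx i.
    by apply/eqP; rewrite eqEcard subsetIl card_edge ?vi.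
  have ij_j : sx i :&: sx j = sx j.
    by apply/eqP; rewrite eqEcard subsetIr card_edge ?vj.
  by rewrite -ij_i ij_j.
Qed.

End ConnectionMatrix.

Theorem mainTheorem5 (R : rcfType) (T : finType) (e : rel T)
  (e_sym : symmetric e) (e_irr : irreflexive e)
  (Heven : ~~ odd #|simplices e|) :
  exists (P S : 'M[R]_(#|simplices e|)),
    [/\ P \in unitmx,
        S^T *m symplJ R #|simplices e| *m S = symplJ R #|simplices e|
      & connmx R e *m connmx R e = invmx P *m S *m P].
Proof.
set D := signmx R e; set A := incmx R e.
have D_sym : D^T = D := signmx_sym R e; have DD : D *m D = 1%:M := signmx_sqr R e.
have DA : D *m A = A := signmx_incmx R e; have AD : A *m D = - A := incmx_signmx R e.
rewrite connmxE -/D -/A -LmxE //.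
apply: (similar_symplectic (W := Wmx A)) => //.
- by rewrite trmx_mul Lmx_sym.
- exact: Wmx_skew.
- rewrite mulmxA -(mulmxA _ _ (Wmx A)) -(mulmxA (Lmx D A)) Lmx_skew //.
  by rewrite mulmxN mulNmx Lmx_skew ?opprK.
- exact: Lmx_sqr_fixed.
Qed.
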